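(* Let $\mathbb{X}$ be a category with finite products. For pre-$\mathsf{D}$-sequences $f_\bullet:A\to B$, $g_\bullet:B\to C$, $g'_\bullet:A\to C$, in $\overline{\mathcal{D}}[\mathbb{X}]$: (i) $\mathsf{T}(f_\bullet)=\langle\pi_0\cdot f_\bullet,\mathsf{D}[f_\bullet]\rangle$; (ii) $\mathsf{D}[i_\bullet]=i_\bullet\cdot\pi_1$; (iii) $\mathsf{D}[i_\bullet\cdot\pi_j]=i_\bullet\cdot(\pi_1\pi_j)$ for $j\in\{0,1\}$; (iv) $\mathsf{D}[f_\bullet\ast g_\bullet]=\mathsf{T}(f_\bullet)\ast\mathsf{D}[g_\bullet]$; (v) $\mathsf{D}[\langle f_\bullet,g'_\bullet\rangle]=\langle\mathsf{D}[f_\bullet],\mathsf{D}[g'_\bullet]\rangle$.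
   Context: Composition in diagrammatic order. $\mathsf{P}(A)=A\times A$, $\mathsf{P}(f)=f\times f$. A pre-$\mathsf{D}$-sequence $f_\bullet:A\to B$ is $(f_n)_{n\ge0}$ with $f_n:\mathsf{P}^n(A)\to B$. For $h:A'\to A$, $k:B\to C$ in $\mathbb{X}$: $(h\cdot f_\bullet)_n=\mathsf{P}^n(h)f_n$, $(f_\bullet\cdot k)_n=f_nk$. Tangent $\mathsf{T}(f_\bullet):\mathsf{P}(A)\to\mathsf{P}(B)$, $\mathsf{T}(f_\bullet)_n=\langle\mathsf{P}^n(\pi_0)f_n,f_{n+1}\rangle$; differential $\mathsf{D}[f_\bullet]:\mathsf{P}(A)\to B$, $\mathsf{D}[f_\bullet]_n=f_{n+1}$. Identity $i_\bullet$: $i_0=1$, $i_n=\pi_1\cdots\pi_1$ ($n$ times). Composition $(f_\bullet\ast g_\bullet)_n=\mathsf{T}^n(f_\bullet)_0g_n$. Pairing $\langle f_\bullet,g_\bullet\rangle_n=\langle f_n,g_n\rangle$. In (i), $\pi_0:\mathsf{P}(A)\to A$; in (iii), $\pi_j:A_0\times A_1\to A_j$ and $\pi_1:\mathsf{P}(A_0\times A_1)\to A_0\times A_1$. *)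

(* Composition is written
   in diagrammatic order: [comp f g] = "f then g" = fg in the paper. *)

Record FPCat := {
  ob :> Type;
  hom : ob -> ob -> Type;
  idm : forall A, hom A A;
  comp : forall {A B C}, hom A B -> hom B C -> hom A C;
  comp_assoc : forall A B C D (f : hom A B) (g : hom B C) (h : hom C D),
      comp (comp f g) h = comp f (comp g h);
  comp_id_l : forall A B (f : hom A B), comp (idm A) f = f;
  comp_id_r : forall A B (f : hom A B), comp f (idm B) = f;
  term : ob;
  bang : forall A, hom A term;
  bang_uniq : forall A (f : hom A term), f = bang A;
  prod : ob -> ob -> ob;
  pi0 : forall A B, hom (prod A B) A;
  pi1 : forall A B, hom (prod A B) B;
  pair : forall {C A B}, hom C A -> hom C B -> hom C (prod A B);
  pair_pi0 : forall C A B (f : hom C A) (g : hom C B), comp (pair f g) (pi0 A B) = f;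
  pair_pi1 : forall C A B (f : hom C A) (g : hom C B), comp (pair f g) (pi1 A B) = g;
  pair_uniq : forall C A B (f : hom C A) (g : hom C B) (h : hom C (prod A B)),
      comp h (pi0 A B) = f -> comp h (pi1 A B) = g -> h = pair f g
}.

Arguments hom {_} _ _.
Arguments idm {_} _.
Arguments comp {_ _ _ _} _ _.
Arguments term {_}.
Arguments bang {_} _.
Arguments prod {_} _ _.
Arguments pi0 {_} _ _.
Arguments pi1 {_} _ _.
Arguments pair {_ _ _ _} _ _.

Section PreD.
Variable X : FPCat.

Definition Pob (A : X) : X := prod A A.
Definition Pmor {A B : X} (f : hom A B) : hom (Pob A) (Pob B) :=
  pair (comp (pi0 A A) f) (comp (pi1 A A) f).

(* P^n, with P^(n+1)(A) := P^n(P(A)) (= P(P^n(A)) up to the obvious identification) *)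
Fixpoint Pn (n : nat) (A : X) : X :=
  match n with O => A | S m => Pn m (Pob A) end.
Fixpoint Pnmor (n : nat) {A B : X} (f : hom A B) : hom (Pn n A) (Pn n B) :=
  match n with O => f | S m => Pnmor m (Pmor f) end.

Definition preD (A B : X) : Type := forall n : nat, hom (Pn n A) B.

Definition seq_eq {A B : X} (f g : preD A B) : Prop := forall n, f n = g n.

Definition precomp {A' A B : X} (h : hom A' A) (f : preD A B) : preD A' B :=
  fun n => comp (Pnmor n h) (f n).
Definition postcomp {A B C : X} (f : preD A B) (k : hom B C) : preD A C :=
  fun n => comp (f n) k.

Definition spair {A B C : X} (f : preD A B) (g : preD A C) : preD A (prod B C) :=
  fun n => pair (f n) (g n).

Definition sD {A B : X} (f : preD A B) : preD (Pob A) B := fun n => f (S n).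

Definition sT {A B : X} (f : preD A B) : preD (Pob A) (Pob B) :=
  fun n => pair (comp (Pnmor n (pi0 A A)) (f n)) (f (S n)).

Fixpoint sTn (n : nat) {A B : X} (f : preD A B) : preD (Pn n A) (Pn n B) :=
  match n with O => f | S m => sTn m (sT f) end.

Fixpoint sid_n (n : nat) (A : X) : hom (Pn n A) A :=
  match n with O => idm A | S m => comp (sid_n m (Pob A)) (pi1 A A) end.
Definition sid (A : X) : preD A A := fun n => sid_n n A.

Definition scomp {A B C : X} (f : preD A B) (g : preD B C) : preD A C :=
  fun n => comp (sTn n f 0) (g n).

End PreD.

Arguments Pob {X} A.
Arguments Pmor {X A B} f.
Arguments Pn {X} n A.
Arguments Pnmor {X} n {A B} f.
Arguments preD {X} A B.
Arguments seq_eq {X A B} f g.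
Arguments precomp {X A' A B} h f.
Arguments postcomp {X A B C} f k.
Arguments spair {X A B C} f g.
Arguments sD {X A B} f.
Arguments sT {X A B} f.
Arguments sTn {X} n {A B} f.
Arguments sid_n {X} n A.
Arguments sid {X} A.
Arguments scomp {X A B C} f g.


(* Each identity is an equation between sequences of maps, and [D] merely
   shifts the index: [D[f]_n = f_(n+1)].  Hence all of them hold termwise by
   unfolding; the only one needing an axiom is (iii), where the two sides
   bracket [i_n pi1 pi_j] differently. *)

Section DifferentialIdentities.
Variable X : FPCat.

Lemma sT_eq_spair_sD {A B : X} (f : preD A B) :
  seq_eq (sT f) (spair (precomp (pi0 A A) f) (sD f)).
Proof. intro n; reflexivity. Qed.

Lemma sD_sid (A : X) : seq_eq (sD (sid A)) (postcomp (sid (Pob A)) (pi1 A A)).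
Proof. intro n; reflexivity. Qed.

Lemma sD_sid_postcomp {A B : X} (k : hom A B) :
  seq_eq (sD (postcomp (sid A) k)) (postcomp (sid (Pob A)) (comp (pi1 A A) k)).
Proof. intro n; apply comp_assoc. Qed.

Lemma sD_scomp {A B C : X} (f : preD A B) (g : preD B C) :
  seq_eq (sD (scomp f g)) (scomp (sT f) (sD g)).
Proof. intro n; reflexivity. Qed.

Lemma sD_spair {A B C : X} (f : preD A B) (g : preD A C) :
  seq_eq (sD (spair f g)) (spair (sD f) (sD g)).
Proof. intro n; reflexivity. Qed.

End DifferentialIdentities.

Theorem proposition3p12 (X : FPCat) (A B C A0 A1 : X)
    (f : preD A B) (g : preD B C) (g' : preD A C) :
  (* (i) *)   seq_eq (sT f) (spair (precomp (pi0 A A) f) (sD f)) /\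
  (* (ii) *)  seq_eq (sD (sid A)) (postcomp (sid (Pob A)) (pi1 A A)) /\
  (* (iii), j = 0 *)
  seq_eq (sD (postcomp (sid (prod A0 A1)) (pi0 A0 A1)))
         (postcomp (sid (Pob (prod A0 A1)))
                   (comp (pi1 (prod A0 A1) (prod A0 A1)) (pi0 A0 A1))) /\
  (* (iii), j = 1 *)
  seq_eq (sD (postcomp (sid (prod A0 A1)) (pi1 A0 A1)))
         (postcomp (sid (Pob (prod A0 A1)))
                   (comp (pi1 (prod A0 A1) (prod A0 A1)) (pi1 A0 A1))) /\
  (* (iv) *)  seq_eq (sD (scomp f g)) (scomp (sT f) (sD g)) /\
  (* (v) *)   seq_eq (sD (spair f g')) (spair (sD f) (sD g')).
Proof.
  split; [apply sT_eq_spair_sD |].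
  split; [apply sD_sid |].
  split; [apply sD_sid_postcomp |].
  split; [apply sD_sid_postcomp |].
  split; [apply sD_scomp | apply sD_spair].
Qed.
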